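(* Let $K\subseteq\mathbb{R}^n$ be a nonempty open convex set and $h:K\to\mathbb{R}$ a continuously differentiable function. If $h$ is strongly quasiconvex with modulus $\gamma>0$ on $K$, then $h$ is CFZ-strongly quasiconvex on $K$.
   Context: For a convex set $\emptyset\neq K\subseteq\mathbb{R}^n$ and $\gamma> 0$, $h:K\to\mathbb{R}$ is strongly quasiconvex with modulus $\gamma$ on $K$ if $h(ty+(1-t)x)\le \max\{h(y),h(x)\}-t(1-t)\frac{\gamma}{2}\|x-y\|^2$ for all $x,y\in K$, $t\in[0,1]$. For $t\in\mathbb{R}$, $S_t(h):=\{x\in K: h(x)\le t\}$; $\mathcal{B}(\bar x,\rho)$ is the open Euclidean ball. Given $\alpha\in\mathbb{R}$, $h$ is $\alpha$-quasiconvex at $\bar x\in K$ if there exist $\rho>0$ and $e\in\mathbb{R}^n$ with $\|e\|=1$ such that for all $y\in K\cap\mathcal{B}(\bar x,\rho)\cap S_{h(\bar x)}(h)$ one has $\langle e,y-\bar x\rangle\ge \alpha\|y-\bar x\|^2$. The function $h$ is CFZ-strongly quasiconvex on $K$ if for every $\bar x\in K$ there exists $\alpha(\bar x)>0$ such that $h$ is $\alpha(\bar x)$-quasiconvex at $\bar x$. *)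

From mathcomp Require Import all_boot all_order all_algebra.
From mathcomp Require Import all_classical all_reals all_analysis.
Set Implicit Arguments. Unset Strict Implicit. Unset Printing Implicit Defensive.
Import Order.TTheory GRing.Theory Num.Theory.
Import numFieldNormedType.Exports.
Local Open Scope classical_set_scope.
Local Open Scope ring_scope.

Definition dotv {R : realType} {n : nat} (u v : 'rV[R]_n) : R :=
  \sum_(i < n) u 0 i * v 0 i.
Definition enorm {R : realType} {n : nat} (u : 'rV[R]_n) : R :=
  Num.sqrt (dotv u u).

Definition strongly_quasiconvex {R : realType} {n : nat}
  (K : set 'rV[R]_n) (h : 'rV[R]_n -> R) (gamma : R) : Prop :=
  forall x y, K x -> K y -> forall t : R, 0 <= t <= 1 ->
    h (t *: y + (1 - t) *: x) <=
      Num.max (h y) (h x) - t * (1 - t) * (gamma / 2) * enorm (x - y) ^+ 2.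

Definition sublevel {R : realType} {n : nat}
  (K : set 'rV[R]_n) (h : 'rV[R]_n -> R) (t : R) : set 'rV[R]_n :=
  [set x | K x /\ h x <= t].

Definition eball {R : realType} {n : nat} (xb : 'rV[R]_n) (rho : R)
  : set 'rV[R]_n := [set y | enorm (y - xb) < rho].

Definition alpha_quasiconvex_at {R : realType} {n : nat}
  (K : set 'rV[R]_n) (h : 'rV[R]_n -> R) (alpha : R) (xb : 'rV[R]_n) : Prop :=
  exists rho : R, 0 < rho /\ exists e : 'rV[R]_n, enorm e = 1 /\
    forall y, (K `&` eball xb rho `&` sublevel K h (h xb)) y ->
      alpha * enorm (y - xb) ^+ 2 <= dotv e (y - xb).

Definition CFZ_strongly_quasiconvex {R : realType} {n : nat}
  (K : set 'rV[R]_n) (h : 'rV[R]_n -> R) : Prop :=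
  forall xb, K xb -> exists alpha : R, 0 < alpha /\ alpha_quasiconvex_at K h alpha xb.

Definition C1_on {R : realType} {n : nat}
  (K : set 'rV[R]_n) (h : 'rV[R]_n -> R) : Prop :=
  exists grad : 'rV[R]_n -> 'rV[R]_n,
    {within K, continuous grad} /\
    forall x, K x -> differentiable h x /\ forall v, 'd h x v = dotv (grad x) v.

(* Fix xb in K and let g be the gradient of h at xb.  For y in K with
   h y <= h xb, strong quasiconvexity on the segment [xb, y] gives
   h (xb + t (y - xb)) <= h xb - t (1 - t) (gamma / 2) |y - xb|^2, and letting
   t -> 0+ yields <g, y - xb> <= - (gamma / 2) |y - xb|^2.  If g <> 0, the unit
   vector e = - g / |g| and alpha = gamma / (2 |g|) witness alpha-quasiconvexity
   at xb, for any radius; if g = 0 the sublevel set is {xb} and any unit vector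
   works. *)

From mathcomp Require Import all_boot all_order all_algebra.
From mathcomp Require Import all_classical all_reals all_analysis.
From mathcomp Require Import lra.
Import Order.TTheory GRing.Theory Num.Theory.
Import numFieldNormedType.Exports.
Local Open Scope classical_set_scope.
Local Open Scope ring_scope.

Section Euclidean.
Variables (R : realType) (n : nat).
Implicit Types (a : R) (u v : 'rV[R]_n).

Lemma dotvv_ge0 u : 0 <= dotv u u.
Proof. by apply: sumr_ge0 => i _; rewrite -expr2 sqr_ge0. Qed.

Lemma dotvv_eq0 u : (dotv u u == 0) = (u == 0).
Proof.
rewrite psumr_eq0 => [|i _]; last by rewrite -expr2 sqr_ge0.
apply/allP/eqP => [u0 | ->]; last by move=> i _; rewrite mxE mul0r eqxx.
apply/rowP => i; have /implyP/(_ isT) := u0 i (mem_index_enum i).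
by rewrite -expr2 sqrf_eq0 mxE => /eqP.
Qed.

Lemma dotvZl a u v : dotv (a *: u) v = a * dotv u v.
Proof. by rewrite /dotv mulr_sumr; apply: eq_bigr => i _; rewrite mxE mulrA. Qed.

Lemma dotvZr a u v : dotv u (a *: v) = a * dotv u v.
Proof. by rewrite /dotv mulr_sumr; apply: eq_bigr => i _; rewrite mxE mulrCA. Qed.

Lemma dotv0r u : dotv u 0 = 0.
Proof. by rewrite -(scale0r 0) dotvZr mul0r. Qed.

Lemma enorm_sqr u : enorm u ^+ 2 = dotv u u.
Proof. by rewrite sqr_sqrtr // dotvv_ge0. Qed.

Lemma enorm_eq0 u : (enorm u == 0) = (u == 0).
Proof. by rewrite sqrtr_eq0 -dotvv_eq0 eq_le dotvv_ge0 andbT. Qed.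

Lemma enormZ a u : enorm (a *: u) = `|a| * enorm u.
Proof. by rewrite /enorm dotvZl dotvZr mulrA -expr2 sqrtrM ?sqr_ge0 // sqrtr_sqr. Qed.

Lemma enormN u : enorm (- u) = enorm u.
Proof. by rewrite -scaleN1r enormZ normrN1 mul1r. Qed.

Lemma enormBC u v : enorm (u - v) = enorm (v - u).
Proof. by rewrite -opprB enormN. Qed.

Lemma enorm_normalize u : u != 0 -> enorm ((enorm u)^-1 *: u) = 1.
Proof.
rewrite -enorm_eq0 => u_neq0.
by rewrite enormZ ger0_norm ?invr_ge0 ?sqrtr_ge0 // mulVf.
Qed.

End Euclidean.

Lemma exists_enorm1 (R : realType) (n : nat) : (0 < n)%N -> exists e : 'rV[R]_n, enorm e = 1.
Proof.
case: n => [//|m] _; exists ((enorm (const_mx 1 : 'rV[R]_m.+1))^-1 *: const_mx 1).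
by apply: enorm_normalize; apply/eqP => /rowP/(_ ord0); rewrite !mxE; apply/eqP/oner_neq0.
Qed.

Lemma diff_le_of_quadratic_decrease (R : realType) (V : normedModType R)
    (f : V -> R) (x d : V) (c : R) :
  differentiable f x ->
  (forall t, 0 < t <= 1 -> f (t *: d + x) <= f x - t * (1 - t) * c) ->
  'd f x d <= - c.
Proof.
move=> df decr.
have quot_cvg : (fun t : R => t^-1 *: (f (t *: d + x) - f x)) @ 0^'+ --> 'd f x d.
  have D_cvg := diff_derivable (v := d) df; rewrite -deriveE //.
  apply: (cvg_trans _ D_cvg).
  by apply: cvg_app; apply: within_subset => t /= /lt0r_neq0.
have bound_cvg : (fun t : R => t * c - c) @ 0^'+ --> 0 * c - c.
  apply: cvg_at_right_filter.
  by apply: cvgB; [apply: cvgM; [exact: cvg_id | exact: cvg_cst] | exact: cvg_cst].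
rewrite -[- c]add0r -(mul0r c).
apply: (ler_cvg_to quot_cvg bound_cvg); near=> t.
have t_gt0 : 0 < t by near: t; exact: nbhs_right_gt.
have t_le1 : t <= 1 by near: t; exact: nbhs_right_le.
have := decr t; rewrite t_gt0 t_le1 => /(_ isT) dec_t.
rewrite /= -[t * c - c](mulKf (lt0r_neq0 t_gt0)) ler_pM2l ?invr_gt0 //; lra.
Unshelve. all: by end_near.
Qed.

Section StronglyQuasiconvex.
Context {R : realType} {n : nat} {K : set 'rV[R]_n} {h : 'rV[R]_n -> R}.

Lemma strongly_quasiconvex_diff_sublevel (gamma : R) (xb y : 'rV[R]_n) :
  strongly_quasiconvex K h gamma -> differentiable h xb ->
  K xb -> K y -> h y <= h xb ->
  'd h xb (y - xb) <= - (gamma / 2 * enorm (y - xb) ^+ 2).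
Proof.
move=> h_sqc dh Kxb Ky hy; apply: diff_le_of_quadratic_decrease => // t /andP[t_gt0 t_le1].
have := h_sqc xb y Kxb Ky t; rewrite (ltW t_gt0) t_le1 => /(_ isT).
rewrite max_r // enormBC -[t * _ * _ * _]mulrA.
suff -> : t *: (y - xb) + xb = t *: y + (1 - t) *: xb by [].
by rewrite scalerBr scalerBl scale1r addrAC -addrA.
Qed.

Lemma alpha_quasiconvex_at_of_linear_bound (g xb : 'rV[R]_n) (c : R) :
  (0 < n)%N -> 0 < c ->
  (forall y, K y -> h y <= h xb -> dotv g (y - xb) <= - (c * enorm (y - xb) ^+ 2)) ->
  exists alpha, 0 < alpha /\ alpha_quasiconvex_at K h alpha xb.
Proof.
move=> n_gt0 c_gt0 g_bound.
have [g0 | g_neq0] := eqVneq g 0.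
  have [e e1] := @exists_enorm1 R n n_gt0.
  exists 1; split=> //; exists 1; split=> //; exists e; split=> // y [[Ky _] [_ hy]].
  have := g_bound y Ky hy; rewrite g0 -(scale0r 0) dotvZl mul0r oppr_ge0.
  rewrite pmulr_rle0 // => norm_le0.
  have -> : y - xb = 0.
    by apply/eqP; rewrite -enorm_eq0 -sqrf_eq0 eq_le norm_le0 sqr_ge0.
  by rewrite enorm_sqr !dotv0r mulr0.
have N_gt0 : 0 < enorm g by rewrite lt_def enorm_eq0 g_neq0 sqrtr_ge0.
exists (c / enorm g); split; first by rewrite divr_gt0.
exists 1; split=> //; exists (- (enorm g)^-1 *: g); split.
  by rewrite scaleNr enormN enorm_normalize.
move=> y [[Ky _] [_ hy]]; rewrite dotvZl mulrAC mulNr -mulrN [_^-1 * _]mulrC.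
rewrite ler_pM2r ?invr_gt0 // lerNr.
exact: g_bound.
Qed.

End StronglyQuasiconvex.

Theorem mainTheorem2 (R : realType) (n : nat) (K : set 'rV[R]_n)
  (h : 'rV[R]_n -> R) (gamma : R) :
  (0 < n)%N ->
  K !=set0 -> open K -> convex_set K ->
  C1_on K h ->
  0 < gamma -> strongly_quasiconvex K h gamma ->
  CFZ_strongly_quasiconvex K h.
Proof.
move=> n_gt0 _ _ _ [grad [_ h_diff]] gamma_gt0 h_sqc xb Kxb.
have [dh dh_grad] := h_diff xb Kxb.
apply: (alpha_quasiconvex_at_of_linear_bound (grad xb) _ (gamma / 2) n_gt0).
  by rewrite divr_gt0.
by move=> y Ky hy; rewrite -dh_grad; exact: (strongly_quasiconvex_diff_sublevel _ _ _ h_sqc).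
Qed.
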